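(* Let $G$ be a graph and let $M$ be a matching in $G$ with parts $U$ and $W$ (so every edge of $M$ joins a vertex of $U$ to a vertex of $W$, and $U\cup W$ is the set of vertices covered by $M$), such that every vertex $w\in W$ has exactly one neighbor in $G$ among the vertices covered by $M$. Suppose that $|N_G(U)\setminus (W\cup N_G(W))|\geq k$. Then $f_o(G)\geq k/4$.
   Context: For a set $S$ of vertices, $N_G(S)=\bigcup_{s\in S}N_G(s)$ is the union of the neighborhoods of the vertices of $S$. For a graph $G$, $f_o(G)$ denotes the maximum of $|V_0|$ over all $V_0\subseteq V(G)$ such that the induced subgraph $G[V_0]$ has all degrees odd. *)

(* A simple graph on a finite vertex type T is a symmetric,
   irreflexive relation e : rel T. *)
From mathcomp Require Import all_boot all_order all_algebra.
Set Implicit Arguments. Unset Strict Implicit. Unset Printing Implicit Defensive.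

Section Defs.
Variables (T : finType) (e : rel T).

Definition nbhd (S : {set T}) : {set T} := [set x | [exists s in S, e s x]].

Definition all_odd_induced (V0 : {set T}) : bool :=
  [forall v in V0, odd #|[set u in V0 | e v u]|].

Definition f_o : nat := \max_(V0 : {set T} | all_odd_induced V0) #|V0|.

(* M is a matching given as a set of ordered edges (u,w), u in part U, w in part W *)
Definition is_matching (M : {set T * T}) : bool :=
  [forall p in M, e p.1 p.2] &&
  [forall p in M, forall q in M, (p != q) ==>
     [&& p.1 != q.1, p.1 != q.2, p.2 != q.1 & p.2 != q.2]].

Definition partU (M : {set T * T}) : {set T} := [set p.1 | p in M].
Definition partW (M : {set T * T}) : {set T} := [set p.2 | p in M].
End Defs.

(* Let X := N(U) \ (W ∪ N(W)). Every x in X has a neighbour in U, so exactly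
   half of the subsets S of U give x odd degree into S; averaging yields an S
   making at least half of X odd into S.  By Gallai's theorem that half of X
   contains a set Y of at least half its size inducing only even degrees.  In
   S ∪ Y the vertices of Y have odd degree (odd into S, even in Y, and none of
   them lies in U or has a neighbour in W), and every u in S of even degree is
   repaired by adding its partner in W, whose only neighbour among U ∪ W ∪ Y is
   u.  The resulting set induces only odd degrees and has at least |X|/4
   vertices. *)

From mathcomp Require Import all_boot all_order all_algebra.
From mathcomp Require Import zify lra.
Set Implicit Arguments. Unset Strict Implicit. Unset Printing Implicit Defensive.

Section InducedParity.
Variable T : finType.
Implicit Types (r : rel T) (A B N P : {set T}) (v x : T).

Definition deg_in r A x := #|[set u in A | r x u]|.

Definition all_even_induced r A := [forall v in A, ~~ odd (deg_in r A v)].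

Lemma deg_inE r A x : deg_in r A x = #|A :&: [set u | r x u]|.
Proof. by apply: eq_card => u; rewrite !inE. Qed.

Lemma deg_in_setU1 r P v x :
  v \notin P -> deg_in r (v |: P) x = r x v + deg_in r P x.
Proof.
move=> vP; rewrite /deg_in; case rxv: (r x v).
  have -> : [set u in v |: P | r x u] = v |: [set u in P | r x u].
    by apply/setP => u; rewrite !inE; case: eqVneq => [->|].
  by rewrite cardsU1 inE (negbTE vP).
by apply: eq_card => u; rewrite !inE; case: eqVneq => [->|] /=; rewrite ?rxv ?andbF.
Qed.

Lemma deg_in_setU r A B x :
  [disjoint A & B] -> deg_in r (A :|: B) x = deg_in r A x + deg_in r B x.
Proof.
move=> AB; apply/eqP; rewrite !deg_inE setIUl (leq_card_setU _ _).2.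
exact: disjointWl (subsetIl _ _) (disjointWr (subsetIl _ _) AB).
Qed.

Lemma odd_card_setD_meet A P N : N \subset A ->
  odd #|(A :\: P) :&: N| = odd #|N| (+) odd #|P :&: N|.
Proof.
move=> NA; rewrite -(cardsID P N) oddD [P :&: N]setIC addbC addbA addbb /=.
congr (odd _); apply: eq_card => u; rewrite !inE andbC.
by case uN: (u \in N); rewrite /= ?andbF // (subsetP NA).
Qed.

Definition complement_in r N : rel T :=
  fun a b => if [&& a \in N, b \in N & a != b] then ~~ r a b else r a b.

Lemma complement_in_sym r N : symmetric r -> symmetric (complement_in r N).
Proof.
by move=> rs a b; rewrite /complement_in eq_sym rs; case: (a \in N); case: (b \in N).
Qed.

Lemma complement_in_irr r N : irreflexive r -> irreflexive (complement_in r N).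
Proof. by move=> ri a; rewrite /complement_in eqxx !andbF ri. Qed.

Lemma deg_complement_in_notin r N P x :
  x \notin N -> deg_in (complement_in r N) P x = deg_in r P x.
Proof. by move=> xN; apply: eq_card => u; rewrite !inE /complement_in (negbTE xN). Qed.

Lemma odd_deg_complement_in r N P x : irreflexive r -> x \in N -> x \in P ->
  odd (deg_in (complement_in r N) P x) = odd (deg_in r P x) (+) ~~ odd #|P :&: N|.
Proof.
move=> ri xN xP; rewrite /deg_in.
set Dr := [set u in P | r x u]; set Dc := [set u in P | complement_in r N x u].
set E := (P :&: N) :\ x.
have outside : Dc :\: N = Dr :\: N.
  by apply/setP => u; rewrite !inE /complement_in xN; case: (u \in N).
have inside_r : Dr :&: N = E :&: Dr.
  apply/setP => u; rewrite !inE; case: eqVneq => [->|_]; first by rewrite ri !andbF.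
  by case: (u \in P); case: (u \in N); case: (r x u).
have inside_c : Dc :&: N = E :\: Dr.
  apply/setP => u; rewrite !inE /complement_in xN.
  case: eqVneq => [->|_] /=; first by rewrite ri !andbF.
  by case: (u \in P); case: (u \in N); case: (r x u).
have cardE : #|E| = #|P :&: N|.-1.
  by rewrite [in RHS](cardsD1 x) inE xP xN.
have PN_gt0 : 0 < #|P :&: N| by apply/card_gt0P; exists x; rewrite inE xP xN.
rewrite -(cardsID N Dr) -(cardsID N Dc) outside inside_r inside_c.
have := cardsID Dr E; rewrite cardE.
case: #|P :&: N| PN_gt0 => // n _ /= <-.
rewrite !oddD; case: (odd #|E :&: Dr|); case: (odd #|E :\: Dr|);
  by case: (odd #|Dr :\: N|).
Qed.

Lemma all_even_complement_in r N P : irreflexive r ->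
  all_even_induced (complement_in r N) P -> odd #|P :&: N| -> all_even_induced r P.
Proof.
move=> ri /forall_inP evenc oddPN; apply/forall_inP => x xP.
have := evenc x xP; case: (boolP (x \in N)) => xN.
  by rewrite (odd_deg_complement_in ri xN xP) oddPN addbF.
by rewrite deg_complement_in_notin.
Qed.

Lemma all_even_complement_in_setU1 r N P v : symmetric r -> irreflexive r ->
  v \notin P -> {in P, forall u, (u \in N) = r v u} ->
  all_even_induced (complement_in r N) P -> ~~ odd #|P :&: N| ->
  all_even_induced r (v |: P).
Proof.
move=> rs ri vP NP /forall_inP evenc evenPN.
apply/forall_inP => x; rewrite in_setU1 deg_in_setU1 // => /predU1P[->|xP].
  rewrite ri; congr (~~ odd _): evenPN.
  by apply: eq_card => u; rewrite !inE; case uP: (u \in P); rewrite //= NP.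
have := evenc x xP; case: (boolP (x \in N)) => xN.
  rewrite (odd_deg_complement_in ri xN xP) (negbTE evenPN) rs -NP // xN.
  by rewrite oddD addbT.
by rewrite deg_complement_in_notin // rs -NP // (negbTE xN).
Qed.

(* Gallai: remove a vertex v of odd degree, complement the edges inside its
   neighbourhood N, and partition the rest by induction. *)
Theorem gallai r A : symmetric r -> irreflexive r ->
  exists2 B : {set T}, B \subset A & all_even_induced r B && all_even_induced r (A :\: B).
Proof.
have [n] := ubnP #|A|; elim: n => // n IH in r A *; rewrite ltnS => leAn rs ri.
have even0 : all_even_induced r set0 by apply/forall_inP => v; rewrite inE.
case evenA: (all_even_induced r A); first by exists A; rewrite ?setDv ?evenA.
move/negbT: evenA => /forall_inPn[v vA]; rewrite negbK => odd_v.
pose N := [set u in A | r v u]; pose A' := A :\ v.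
have NA' : N \subset A'.
  by apply/subsetP => u; rewrite !inE => /andP[-> ruv]; case: eqVneq ruv => // ->; rewrite ri.
have NA'P P : P \subset A' -> {in P, forall u, (u \in N) = r v u}.
  by move=> PA' u /(subsetP PA'); rewrite !inE => /andP[_ ->].
have ltA'n : #|A'| < n by move: leAn; rewrite (cardsD1 v A) vA.
have [B' B'A' /andP[evenB' evenC']] :=
  IH _ _ ltA'n (complement_in_sym N rs) (complement_in_irr N ri).
(* Since |N| is odd, exactly one part of the partition of A' meets N oddly;
   that part stays even in r, and v joins the other one. *)
suff odd_part_alone P : P \subset A' -> all_even_induced (complement_in r N) P ->
    all_even_induced (complement_in r N) (A' :\: P) -> odd #|P :&: N| ->
    exists2 B : {set T}, B \subset A & all_even_induced r B && all_even_induced r (A :\: B).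
  case: (boolP (odd #|B' :&: N|)) => [oddB'N|evenB'N]; first exact: (odd_part_alone B').
  apply: (odd_part_alone (A' :\: B')) => //.
  - exact: subsetDl.
  - by rewrite setDDr setDv set0U (setIidPr B'A').
  - by rewrite odd_card_setD_meet // odd_v (negbTE evenB'N).
move=> PA' evenP evenCP oddPN; exists P.
  by apply: subset_trans PA' _; apply: subsetDl.
rewrite (all_even_complement_in ri evenP oddPN) /=.
have vP : v \notin P by apply/negP => /(subsetP PA'); rewrite !inE eqxx.
have -> : A :\: P = v |: (A' :\: P).
  by apply/setP => u; rewrite !inE; case: eqVneq => [->|] //=; rewrite vA vP.
apply: (all_even_complement_in_setU1 rs ri _ _ evenCP).
- by rewrite /A' !inE eqxx !andbF.
- exact/NA'P/subsetDl.
by rewrite odd_card_setD_meet // odd_v oddPN.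
Qed.

Lemma exists_all_even_induced_half r A : symmetric r -> irreflexive r ->
  exists2 Y : {set T}, Y \subset A & all_even_induced r Y && (#|A| <= #|Y|.*2).
Proof.
move=> rs ri; have [B BA /andP[evenB evenC]] := gallai A rs ri.
have := cardsID B A; rewrite (setIidPr BA).
case: (leqP #|A :\: B| #|B|) => le_CB.
  by exists B; rewrite // evenB -addnn; lia.
by exists (A :\: B); rewrite ?subsetDl // evenC -addnn; lia.
Qed.

End InducedParity.

Section OddDegreeSubset.
Variable T : finType.
Implicit Types (A B S X : {set T}) (r : rel T).

Lemma card_set_in_sum (I : finType) (X : {set I}) (p : pred I) :
  #|[set x in X | p x]| = \sum_(x in X) p x.
Proof. by rewrite -sum1dep_card big_mkcondr; apply: eq_bigr => x _; case: (p x). Qed.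

Definition toggle (u : T) S := if u \in S then S :\ u else u |: S.

Lemma toggleK u : involutive (toggle u).
Proof.
move=> S; rewrite /toggle; case: (boolP (u \in S)) => uS.
  by rewrite setD11 setD1K.
by rewrite setU11 setU1K.
Qed.

Lemma toggle_subset u A S : u \in A -> (toggle u S \subset A) = (S \subset A).
Proof.
move=> uA; rewrite /toggle; case: (boolP (u \in S)) => uS.
  apply/idP/idP => [sA|]; first by rewrite -(setD1K uS) subUset sub1set uA.
  exact: subset_trans (subsetDl _ _).
by rewrite subUset sub1set uA.
Qed.

Lemma odd_toggle_meet u B S :
  u \in B -> odd #|toggle u S :&: B| = ~~ odd #|S :&: B|.
Proof.
move=> uB; rewrite /toggle; case: (boolP (u \in S)) => uS.
  rewrite [in RHS](cardsD1 u) inE uS uB /= setIDAC.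
  by rewrite negbK.
by rewrite setIUl (setIidPl _) ?sub1set // cardsU1 inE (negbTE uS).
Qed.

Lemma card_odd_meet_powerset A B : ~~ [disjoint A & B] ->
  (#|[set S in powerset A | odd #|S :&: B|]|).*2 = #|powerset A|.
Proof.
case/pred0Pn => u /andP[uA uB]; set O := [set S in powerset A | odd #|S :&: B|].
have toggleO : toggle u @: O = powerset A :\: O.
  apply/setP => S; rewrite !inE; apply/imsetP/andP => [[S']|[notOS SA]].
    rewrite !inE => /andP[S'A oddS'] ->.
    by rewrite toggle_subset // odd_toggle_meet // oddS' S'A.
  exists (toggle u S); last by rewrite toggleK.
  rewrite !inE toggle_subset // odd_toggle_meet //.
  by rewrite SA; move: notOS; rewrite SA.
rewrite -addnn -[X in _ + X](card_imset O (can_inj (toggleK u))) toggleO -[in RHS](cardsID O).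
by rewrite (setIidPr _) //; apply/subsetP => S; rewrite inE => /andP[].
Qed.

Lemma exists_subset_odd_deg_half r A X :
  {in X, forall x, exists2 u, u \in A & r x u} ->
  exists2 S : {set T}, S \subset A & #|X| <= (#|[set x in X | odd (deg_in r S x)]|).*2.
Proof.
move=> nbrX; pose good S := [set x in X | odd (deg_in r S x)].
have count : (\sum_(S in powerset A) #|good S|).*2 = #|X| * #|powerset A|.
  under eq_bigr do rewrite card_set_in_sum.
  rewrite exchange_big -muln2 big_distrl -sum_nat_const /=; apply: eq_bigr => x xX.
  rewrite muln2 -(@card_odd_meet_powerset A [set u | r x u]); last first.
    by case: (nbrX x xX) => u uA rxu; apply/pred0Pn; exists u; rewrite /= uA inE.
  by rewrite card_set_in_sum; congr _.*2; apply: eq_bigr => S _; rewrite deg_inE.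
have A0 : set0 \in powerset A by rewrite powersetE sub0set.
case: (arg_maxnP (fun S => #|good S|) A0) => S SA maxS.
exists S; first by rewrite -powersetE.
have P_gt0 : 0 < #|powerset A| by apply/card_gt0P; exists set0.
rewrite -(leq_pmul2r P_gt0) -count -doubleMl leq_double mulnC -sum_nat_const.
exact: leq_sum.
Qed.

End OddDegreeSubset.

Lemma leq_card_f_o (T : finType) (e : rel T) (V : {set T}) :
  all_odd_induced e V -> #|V| <= f_o e.
Proof. exact: (@leq_bigmax_cond _ (all_odd_induced e) (fun V : {set T} => #|V|)). Qed.

Section PendantMatching.
Variables (T : finType) (e : rel T).
Hypotheses (e_sym : symmetric e) (e_irr : irreflexive e).
Variable M : {set T * T}.
Hypothesis M_matching : is_matching e M.
Hypothesis partW_pendant :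
  forall w, w \in partW M -> #|[set x in partU M :|: partW M | e w x]| = 1.

Local Notation U := (partU M).
Local Notation W := (partW M).

Lemma matching_edge p : p \in M -> e p.1 p.2.
Proof. by case/andP: M_matching => /forall_inP edgeM _; apply: edgeM. Qed.

Lemma matching_disjoint p q : p \in M -> q \in M -> p != q ->
  [&& p.1 != q.1, p.1 != q.2, p.2 != q.1 & p.2 != q.2].
Proof.
case/andP: M_matching => _ /forall_inP disjM pM qM; apply/implyP.
by move/forall_inP: (disjM p pM); apply.
Qed.

Lemma matching_fst_inj : {in M &, injective fst}.
Proof.
move=> p q pM qM pq; apply/eqP; apply: contraT => /(matching_disjoint pM qM).
by rewrite pq eqxx.
Qed.

Lemma matching_fst_neq_snd p q : p \in M -> q \in M -> p.1 != q.2.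
Proof.
move=> pM qM; case: (eqVneq p q) => [->|/(matching_disjoint pM qM)/and4P[] //].
by apply: contraTneq (matching_edge qM) => ->; rewrite e_irr.
Qed.

Lemma partU_notin_partW u : u \in U -> u \notin W.
Proof.
case/imsetP => p pM ->; apply/imsetP => -[q qM].
by apply/eqP; apply: matching_fst_neq_snd.
Qed.

Lemma matched_nbr p x : p \in M -> x \in U :|: W -> e p.2 x -> x = p.1.
Proof.
move=> pM xUW epx; have pW : p.2 \in W by apply/imsetP; exists p.
have /eqP/cards1P[y Ny] := partW_pendant pW.
have pUW : p.1 \in U :|: W by rewrite inE; apply/orP; left; apply/imsetP; exists p.
have : x \in [set x in U :|: W | e p.2 x] by rewrite inE xUW.
have : p.1 \in [set x in U :|: W | e p.2 x] by rewrite inE pUW e_sym matching_edge.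
by rewrite Ny !inE => /eqP-> /eqP->.
Qed.

Lemma partU_sub_nbhd_partW : U \subset nbhd e W.
Proof.
apply/subsetP => _ /imsetP[p pM ->]; rewrite inE; apply/exists_inP.
by exists p.2; [apply/imsetP; exists p | rewrite e_sym matching_edge].
Qed.

Section OddExtension.
Variables S Y : {set T}.
Hypothesis S_sub_U : S \subset U.
Hypothesis Y_far_W : [disjoint Y & W :|: nbhd e W].
Hypothesis Y_even : all_even_induced e Y.
Hypothesis Y_odd_S : {in Y, forall y, odd (deg_in e S y)}.

Definition even_partners :=
  [set p.2 | p in M & (p.1 \in S) && ~~ odd (deg_in e (S :|: Y) p.1)].

Definition odd_extension := S :|: Y :|: even_partners.

Lemma even_partners_sub_W : even_partners \subset W.
Proof. by apply/subsetP => _ /imsetP[p /setIdP[pM _] ->]; apply/imsetP; exists p. Qed.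

Lemma partW_Y_nonadj y w : y \in Y -> w \in W -> e w y = false.
Proof.
move=> yY wW; apply: contraFF (disjointFr Y_far_W yY) => ewy.
by rewrite !inE; apply/orP; right; apply/exists_inP; exists w.
Qed.

Lemma Y_notin_W y : y \in Y -> y \notin W.
Proof. by move=> yY; have := disjointFr Y_far_W yY; rewrite inE => /norP[]. Qed.

Lemma Y_notin_U y : y \in Y -> y \notin U.
Proof.
move=> yY; apply: contraFN (disjointFr Y_far_W yY) => /(subsetP partU_sub_nbhd_partW) yN.
by rewrite inE yN orbT.
Qed.

Lemma S_Y_disjoint : [disjoint S & Y].
Proof.
rewrite disjoint_subset; apply/subsetP => x /(subsetP S_sub_U) xU.
by rewrite inE; apply: contraL xU => /Y_notin_U.
Qed.

Lemma S_Y_even_partners_disjoint : [disjoint S :|: Y & even_partners].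
Proof.
rewrite disjoint_subset; apply/subsetP => x xSY; rewrite inE.
apply: contraL xSY => /(subsetP even_partners_sub_W) xW; rewrite inE negb_or.
apply/andP; split; apply: contraL xW; first by move/(subsetP S_sub_U)/partU_notin_partW.
exact: Y_notin_W.
Qed.

Lemma odd_deg_extension_of_S x : x \in S -> odd (deg_in e odd_extension x).
Proof.
move=> xS; have xU := subsetP S_sub_U x xS.
have [p pM px] : exists2 p, p \in M & x = p.1 by case/imsetP: xU => p; exists p.
pose b := ~~ odd (deg_in e (S :|: Y) x).
have partner_only : [set u in even_partners | e x u] = if b then [set p.2] else set0.
  apply/setP => u; rewrite inE; apply/andP/idP.
    case=> /imsetP[q /setIdP[qM /andP[qS evq]] ->] exq.
    have xq : x = q.1 by apply: matched_nbr; rewrite // ?inE ?xU // e_sym.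
    have pq : p = q by apply: matching_fst_inj; rewrite // -px.
    by rewrite /b xq evq inE pq.
  case: ifP => bx; rewrite inE // => /eqP->; split; last by rewrite px matching_edge.
  by apply/imsetP; exists p; rewrite // inE pM -px xS.
rewrite /odd_extension deg_in_setU ?S_Y_even_partners_disjoint // {2}/deg_in partner_only.
by rewrite oddD /b; case: (odd (deg_in e (S :|: Y) x)); rewrite ?cards1 ?cards0.
Qed.

Lemma odd_deg_extension_of_Y y : y \in Y -> odd (deg_in e odd_extension y).
Proof.
move=> yY; rewrite /odd_extension deg_in_setU ?S_Y_even_partners_disjoint //.
rewrite deg_in_setU ?S_Y_disjoint //.
have -> : deg_in e even_partners y = 0.
  apply/eqP; rewrite cards_eq0; apply/eqP/setP => w; rewrite !inE e_sym.
  case: (boolP (w \in even_partners)) => // /(subsetP even_partners_sub_W) wW.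
  by rewrite partW_Y_nonadj.
by rewrite addn0 oddD Y_odd_S // (negbTE (forall_inP Y_even y yY)).
Qed.

Lemma deg_extension_even_partner w : w \in even_partners -> deg_in e odd_extension w = 1.
Proof.
case/imsetP => p /setIdP[pM /andP[pS _]] ->; have pW : p.2 \in W by apply/imsetP; exists p.
rewrite /deg_in /odd_extension -(cards1 p.1); apply: eq_card => u; rewrite !inE.
apply/andP/eqP => [[uV epu] | ->]; last by rewrite pS e_sym matching_edge.
have uUW : u \in U :|: W.
  move: uV; rewrite -orbA => /or3P[uS|uY|uW'].
  - by rewrite inE (subsetP S_sub_U).
  - by rewrite partW_Y_nonadj in epu.
  - by rewrite inE (subsetP even_partners_sub_W) ?orbT.
exact: matched_nbr epu.
Qed.

Lemma all_odd_induced_extension : all_odd_induced e odd_extension.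
Proof.
apply/forall_inP => x; rewrite !in_setU -orbA => /or3P[xS|xY|xW'].
- exact: odd_deg_extension_of_S.
- exact: odd_deg_extension_of_Y.
- by have := deg_extension_even_partner xW'; rewrite /deg_in => ->.
Qed.

End OddExtension.

Lemma card_nbhd_partU_setD_le_f_o : #|nbhd e U :\: (W :|: nbhd e W)| <= 4 * f_o e.
Proof.
set X := nbhd e U :\: _.
have nbrX : {in X, forall x, exists2 u, u \in U & e x u}.
  by move=> x; rewrite !inE => /andP[_ /exists_inP[u uU eux]]; exists u; rewrite // e_sym.
have [S SU halfX] := exists_subset_odd_deg_half nbrX.
set O := [set x in X | odd (deg_in e S x)] in halfX.
have [Y YO /andP[Y_even halfO]] := exists_all_even_induced_half O e_sym e_irr.
have Y_far : [disjoint Y & W :|: nbhd e W].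
  rewrite disjoint_subset; apply/subsetP => y /(subsetP YO).
  by rewrite !inE => /andP[/andP[]].
have Y_odd : {in Y, forall y, odd (deg_in e S y)}.
  by move=> y /(subsetP YO); rewrite inE => /andP[].
have ext_le := leq_card_f_o (all_odd_induced_extension SU Y_far Y_even Y_odd).
have Y_le : #|Y| <= #|odd_extension S Y|.
  by apply/subset_leq_card; rewrite /odd_extension -setUA setUCA subsetUl.
lia.
Qed.

End PendantMatching.

Import GRing.Theory Num.Theory.
Local Open Scope ring_scope.

Theorem lemma2p3 (T : finType) (e : rel T) (e_sym : symmetric e)
  (e_irr : irreflexive e) (M : {set T * T}) (k : rat) :
  is_matching e M ->
  (forall w, w \in partW M ->
     #|[set x in partU M :|: partW M | e w x]| = 1%N) ->
  k <= (#|nbhd e (partU M) :\: (partW M :|: nbhd e (partW M))|)%:R ->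
  k / 4 <= (f_o e)%:R.
Proof.
move=> M_matching partW_pendant le_k_X.
have := card_nbhd_partU_setD_le_f_o e_sym e_irr M_matching partW_pendant.
rewrite -(ler_nat rat) natrM => le_X_fo.
lra.
Qed.
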